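(* Let $p\geq 5$ be a prime. Then \[h(-4p)\leq \frac{3\sqrt{p}}{2\pi}\bigl(\log p+5-2\log 6\bigr).\]
   Context: For a negative discriminant $D$, $h(D)$ denotes the class number of primitive positive definite binary quadratic forms of discriminant $D$. *)

From Stdlib Require Import ZArith Znumtheory Reals List.
Open Scope Z_scope.

(* A binary quadratic form a x^2 + b x y + c y^2, encoded as (a, b, c). *)
Definition qform : Type := (Z * Z * Z)%type.

Definition qf_a (f : qform) : Z := fst (fst f).
Definition qf_b (f : qform) : Z := snd (fst f).
Definition qf_c (f : qform) : Z := snd f.

Definition disc (f : qform) : Z := qf_b f * qf_b f - 4 * qf_a f * qf_c f.

Definition primitive (f : qform) : Prop :=
  Z.gcd (Z.gcd (qf_a f) (qf_b f)) (qf_c f) = 1.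

Definition pos_def (f : qform) : Prop := disc f < 0 /\ 0 < qf_a f.

Definition ppd_form (D : Z) (f : qform) : Prop :=
  primitive f /\ pos_def f /\ disc f = D.

(* f acted on by the matrix [[al, be], [ga, de]] : (f.M)(x,y) = f(al x + be y, ga x + de y) *)
Definition act (f : qform) (al be ga de : Z) : qform :=
  let a := qf_a f in let b := qf_b f in let c := qf_c f in
  (a*al*al + b*al*ga + c*ga*ga,
   2*a*al*be + b*(al*de + be*ga) + 2*c*ga*de,
   a*be*be + b*be*de + c*de*de).

Definition sl2_equiv (f g : qform) : Prop :=
  exists al be ga de : Z, al*de - be*ga = 1 /\ act f al be ga de = g.

Definition is_class_number (D : Z) (h : nat) : Prop :=
  exists reps : list qform,
    length reps = h /\
    (forall f, In f reps -> ppd_form D f) /\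
    (forall i j, (i < h)%nat -> (j < h)%nat -> i <> j ->
       ~ sl2_equiv (nth i reps (0,0,0)) (nth j reps (0,0,0))) /\
    (forall g, ppd_form D g -> exists f, In f reps /\ sl2_equiv f g).

(* A class of primitive forms of discriminant -4p contains a reduced form (a, b, c) with
   -a < b <= a <= c, and then 3 a^2 <= 4p; so h(-4p) is at most the number of pairs (a, b) with
   a <= X = floor(sqrt(4p/3)), -a < b <= a and 4a | b^2 + 4p.  Writing b = 2 β, for fixed a these
   β are square roots of -p modulo a < p, of which there are at most w(a) d'(a), where d'(a) counts
   the odd divisors of a and w(a) = 1, 2 or 4 accounts for the power of 2 in a.  Exchanging the
   order of summation, sum_{a <= X} w(a) d'(a) = sum_{odd g <= X} (X/g + X/4g + 2 X/8g) (floors),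
   which odd harmonic sums bound by (3 sqrt 3 / 4 pi) X (2 ln X + 5 - 4 ln 2 - ln 3) when X >= 32;
   the cases X < 32 are computed.  Substituting X <= 2 sqrt(p/3) gives the bound. *)
From Stdlib Require Import ZArith Znumtheory Reals Lra Lia List ClassicalEpsilon.
From Coquelicot Require Import Coquelicot.
Open Scope Z_scope.

(** * Reduction of binary quadratic forms *)

Lemma act_act f al be ga de al' be' ga' de' :
  act (act f al be ga de) al' be' ga' de' =
  act f (al*al' + be*ga') (al*be' + be*de') (ga*al' + de*ga') (ga*be' + de*de').
Proof. destruct f as [[a b] c]; cbv [act qf_a qf_b qf_c fst snd]; f_equal; [f_equal|]; ring. Qed.

Lemma act_1 f : act f 1 0 0 1 = f.
Proof. destruct f as [[a b] c]; cbv [act qf_a qf_b qf_c fst snd]; f_equal; [f_equal|]; ring. Qed.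

Lemma disc_act f al be ga de : disc (act f al be ga de) = (al*de - be*ga)^2 * disc f.
Proof. destruct f as [[a b] c]; cbv [disc act qf_a qf_b qf_c fst snd]; ring. Qed.

Lemma sl2_equiv_refl f : sl2_equiv f f.
Proof. exists 1, 0, 0, 1; split; [ring | apply act_1]. Qed.

Lemma sl2_equiv_trans f g h : sl2_equiv f g -> sl2_equiv g h -> sl2_equiv f h.
Proof.
  intros (al & be & ga & de & Hdet & <-) (al' & be' & ga' & de' & Hdet' & <-).
  exists (al*al' + be*ga'), (al*be' + be*de'), (ga*al' + de*ga'), (ga*be' + de*de').
  split; [|symmetry; apply act_act].
  transitivity ((al*de - be*ga) * (al'*de' - be'*ga')); [ring | rewrite Hdet, Hdet'; ring].
Qed.

Lemma sl2_equiv_sym f g : sl2_equiv f g -> sl2_equiv g f.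
Proof.
  intros (al & be & ga & de & Hdet & <-).
  exists de, (-be), (-ga), al; split; [lia|].
  rewrite act_act; rewrite <- (act_1 f) at 2; f_equal; lia.
Qed.

Lemma primitive_of_act f al be ga de : primitive (act f al be ga de) -> primitive f.
Proof.
  destruct f as [[a b] c]; unfold primitive; cbv [act qf_a qf_b qf_c fst snd].
  set (d := Z.gcd (Z.gcd a b) c); intros Hprim.
  assert (Hda : (d | a)) by (apply (Z.divide_trans _ (Z.gcd a b)); apply Z.gcd_divide_l).
  assert (Hdb : (d | b)) by (apply (Z.divide_trans _ (Z.gcd a b)); [apply Z.gcd_divide_l | apply Z.gcd_divide_r]).
  assert (Hdc : (d | c)) by apply Z.gcd_divide_r.
  apply Z.divide_1_r_nonneg; [apply Z.gcd_nonneg|].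
  rewrite <- Hprim; clearbody d.
  destruct Hda as [a' ->], Hdb as [b' ->], Hdc as [c' ->].
  apply Z.gcd_greatest; [apply Z.gcd_greatest|].
  - exists (a'*al*al + b'*al*ga + c'*ga*ga); ring.
  - exists (2*a'*al*be + b'*(al*de + be*ga) + 2*c'*ga*de); ring.
  - exists (a'*be*be + b'*be*de + c'*de*de); ring.
Qed.

Definition reduced (f : qform) : Prop := - qf_a f < qf_b f <= qf_a f /\ qf_a f <= qf_c f.

Lemma reduced_leading_coef_bound f : reduced f -> 0 < qf_a f -> 3 * (qf_a f * qf_a f) <= - disc f.
Proof. destruct f as [[a b] c]; cbv [reduced disc qf_a qf_b qf_c fst snd]; nia. Qed.

Lemma act_translate a b c k : act (a, b, c) 1 k 0 1 = (a, 2*a*k + b, a*k*k + b*k + c).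
Proof. cbv [act qf_a qf_b qf_c fst snd]; f_equal; [f_equal|]; ring. Qed.

Lemma act_swap a b c : act (a, b, c) 0 (-1) 1 0 = (c, - b, a).
Proof. cbv [act qf_a qf_b qf_c fst snd]; f_equal; [f_equal|]; ring. Qed.

(* Translating b into (-a, a] and swapping a with c while c < a terminates since a decreases. *)
Lemma exists_reduced_sl2_equiv g : 0 < qf_a g -> disc g < 0 ->
  exists f, sl2_equiv f g /\ reduced f /\ disc f = disc g /\ 0 < qf_a f.
Proof.
  remember (Z.to_nat (qf_a g)) as n eqn:Hn.
  revert g Hn; induction n as [n IH] using lt_wf_ind; intros [[a b] c] Hn Ha Hd.
  cbv [qf_a qf_b qf_c fst snd] in *.
  set (k := (a - b) / (2*a)).
  assert (Hk := Z.div_mod (a - b) (2*a) ltac:(lia)).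
  assert (Hk' := Z.mod_pos_bound (a - b) (2*a) ltac:(lia)); fold k in Hk.
  set (b1 := 2*a*k + b); set (c1 := a*k*k + b*k + c).
  assert (Hg1 : sl2_equiv (a, b1, c1) (a, b, c)).
  { apply sl2_equiv_sym; exists 1, k, 0, 1; split; [ring | apply act_translate]. }
  assert (Hd1 : disc (a, b1, c1) = disc (a, b, c)).
  { unfold b1, c1; rewrite <- act_translate, disc_act; ring. }
  destruct (Z_le_gt_dec a c1) as [Hac1 | Hc1a].
  - exists (a, b1, c1); cbv [reduced qf_a qf_b qf_c fst snd]; repeat split; auto; lia.
  - assert (Hc1 : 0 < c1) by (cbv [disc qf_a qf_b qf_c fst snd] in Hd1, Hd; nia).
    destruct (IH (Z.to_nat c1) ltac:(lia) (c1, - b1, a)) as (f & Hf & Hred & Hdf & Hfa);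
      cbv [qf_a fst snd]; try lia.
    { rewrite <- act_swap, disc_act, Hd1; lia. }
    exists f; split; [|split; [exact Hred | split; [|exact Hfa]]].
    + apply (sl2_equiv_trans _ (c1, - b1, a)); [exact Hf|].
      apply (sl2_equiv_trans _ (a, b1, c1)); [|exact Hg1].
      apply sl2_equiv_sym; exists 0, (-1), 1, 0; split; [ring | apply act_swap].
    + rewrite Hdf, <- act_swap, disc_act, Hd1; ring.
Qed.

(** * Counting reduced forms *)

Section DedupBy.
Variables (A : Type) (R : A -> A -> Prop).
Hypothesis R_refl : forall x, R x x.
Hypothesis R_sym : forall x y, R x y -> R y x.

Fixpoint dedup_by (l : list A) : list A :=
  match l with
  | nil => nil
  | x :: t =>
      let r := dedup_by t in
      if excluded_middle_informative (exists y, In y r /\ R x y) then r else x :: r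
  end.

Lemma dedup_by_incl l x : In x (dedup_by l) -> In x l.
Proof.
  induction l as [|y t IH]; simpl; [easy|].
  destruct excluded_middle_informative; simpl; intuition.
Qed.

Lemma dedup_by_length_le l : (length (dedup_by l) <= length l)%nat.
Proof. induction l as [|y t IH]; simpl; [|destruct excluded_middle_informative; simpl]; lia. Qed.

Lemma dedup_by_cover l x : In x l -> exists y, In y (dedup_by l) /\ R x y.
Proof.
  induction l as [|z t IH]; simpl; [easy|].
  destruct excluded_middle_informative as [Hex | Hnot]; intros [<- | Hx]; auto.
  - exists z; simpl; auto.
  - destruct (IH Hx) as (y & ? & ?); exists y; simpl; auto.
Qed.

Lemma dedup_by_nth_not_rel l d i j :
  (i < length (dedup_by l))%nat -> (j < length (dedup_by l))%nat -> i <> j ->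
  ~ R (nth i (dedup_by l) d) (nth j (dedup_by l) d).
Proof.
  revert i j; induction l as [|x t IH]; simpl; intros i j Hi Hj Hij; [lia|].
  destruct excluded_middle_informative as [Hex | Hnot]; [now apply IH|].
  simpl in Hi, Hj; destruct i as [|i], j as [|j]; simpl; try lia.
  - intros Hr; apply Hnot; exists (nth j (dedup_by t) d); split; [apply nth_In; lia | exact Hr].
  - intros Hr; apply Hnot; exists (nth i (dedup_by t) d); split; [apply nth_In; lia | auto].
  - apply IH; lia.
Qed.

End DedupBy.

Lemma length_le_of_injective {A B : Type} (l : list A) (k : list B) (f : A -> B) :
  NoDup l -> (forall x y, In x l -> In y l -> f x = f y -> x = y) ->
  (forall x, In x l -> In (f x) k) -> (length l <= length k)%nat.
Proof.
  intros Hl Hinj Hin; rewrite <- (length_map f l).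
  apply NoDup_incl_length.
  - apply NoDup_map_NoDup_ForallPairs; [intros x y Hx Hy; apply Hinj; auto | exact Hl].
  - intros y (x & <- & Hx)%in_map_iff; auto.
Qed.

Definition zrange (lo : Z) (n : nat) : list Z := map (fun i => lo + Z.of_nat i) (seq 0 n).

Lemma in_zrange lo n x : In x (zrange lo n) <-> lo <= x < lo + Z.of_nat n.
Proof.
  unfold zrange; rewrite in_map_iff; split.
  - intros (i & <- & Hi); apply in_seq in Hi; lia.
  - intros Hx; exists (Z.to_nat (x - lo)); rewrite in_seq; lia.
Qed.

Lemma NoDup_zrange lo n : NoDup (zrange lo n).
Proof.
  apply NoDup_map_NoDup_ForallPairs; [|apply seq_NoDup].
  intros x y _ _ Hxy; lia.
Qed.

Lemma zrange_S lo n : zrange lo (S n) = zrange lo n ++ (lo + Z.of_nat n) :: nil.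
Proof. unfold zrange; rewrite seq_S, map_app; reflexivity. Qed.

Definition middle_coefs (D a : Z) : list Z :=
  filter (fun b => (b*b - D) mod (4*a) =? 0) (zrange (1 - a) (Z.to_nat (2*a))).

Definition candidate_forms (D X : Z) : list qform :=
  flat_map (fun a => map (fun b => (a, b, (b*b - D) / (4*a))) (middle_coefs D a))
           (zrange 1 (Z.to_nat X)).

Definition ppd_formb (D : Z) (f : qform) : bool :=
  (Z.gcd (Z.gcd (qf_a f) (qf_b f)) (qf_c f) =? 1) && (disc f <? 0) && (0 <? qf_a f) && (disc f =? D).

Lemma ppd_formb_spec D f : ppd_formb D f = true <-> ppd_form D f.
Proof.
  unfold ppd_formb, ppd_form, primitive, pos_def.
  rewrite !Bool.andb_true_iff, Z.eqb_eq, Z.ltb_lt, Z.ltb_lt, Z.eqb_eq; tauto.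
Qed.

Lemma reduced_in_candidate_forms D X f :
  ppd_form D f -> reduced f -> qf_a f <= X -> In f (candidate_forms D X).
Proof.
  destruct f as [[a b] c]; cbv [ppd_form pos_def reduced disc qf_a qf_b qf_c fst snd].
  intros (_ & (Hd & Ha) & HD) Hred HX.
  assert (Hc : b*b - D = c * (4*a)) by lia.
  apply in_flat_map; exists a; split; [apply in_zrange; lia|].
  apply in_map_iff; exists b; split.
  - rewrite Hc, Z.div_mul by lia; reflexivity.
  - apply filter_In; rewrite in_zrange, Hc, Z.mod_mul by lia; split; [lia | reflexivity].
Qed.

(* Every class has a reduced representative, and reduced forms have 3 a^2 <= -D. *)
Lemma class_number_le_candidates D X : D < 0 -> 0 <= X -> - D < 3 * ((X + 1) * (X + 1)) ->
  exists h, is_class_number D h /\ (h <= length (candidate_forms D X))%nat.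
Proof.
  intros HD HX0 HX.
  set (reps := dedup_by _ sl2_equiv (filter (ppd_formb D) (candidate_forms D X))).
  exists (length reps); split.
  2: { eapply Nat.le_trans; [apply dedup_by_length_le | apply filter_length_le]. }
  exists reps; split; [reflexivity | split; [|split]].
  - intros f Hf; apply dedup_by_incl, filter_In in Hf; apply ppd_formb_spec; tauto.
  - intros i j Hi Hj Hij; apply dedup_by_nth_not_rel; auto using sl2_equiv_sym.
  - intros g (Hprim & (Hdg & Hag) & HgD).
    destruct (exists_reduced_sl2_equiv g Hag Hdg) as (f & Hfg & Hred & Hdf & Hfa).
    assert (Hf : ppd_form D f).
    { destruct Hfg as (al & be & ga & de & _ & Hact).
      split; [apply (primitive_of_act f al be ga de); congruence | split; [split|]; lia]. }
    assert (Hbound := reduced_leading_coef_bound f Hred Hfa).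
    destruct (dedup_by_cover _ sl2_equiv sl2_equiv_refl (filter (ppd_formb D) (candidate_forms D X)) f)
      as (r & Hr & Hfr).
    { assert (Ha : qf_a f <= X) by (destruct (Z_le_gt_dec (qf_a f) X); [easy | nia]).
      apply filter_In; split; [now apply reduced_in_candidate_forms | now apply ppd_formb_spec]. }
    exists r; split; [exact Hr | eauto using sl2_equiv_trans, sl2_equiv_sym].
Qed.

(** * Square roots of -p modulo a *)

Lemma odd_iff_not_2_divide x : Z.odd x = true <-> ~ (2 | x).
Proof.
  rewrite (Zdiv2_odd_eqn x) at 2; split.
  - intros H [k Hk]; rewrite H in Hk; lia.
  - intros H; destruct (Z.odd x) eqn:E; [reflexivity|].
    exfalso; apply H; exists (Z.div2 x); lia.
Qed.

Lemma odd_of_divide g n : (g | n) -> Z.odd n = true -> Z.odd g = true.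
Proof. rewrite !odd_iff_not_2_divide; eauto using Z.divide_trans. Qed.

Lemma rel_prime_pow2_odd k x : Z.odd x = true -> rel_prime (2 ^ Z.of_nat k) x.
Proof.
  intros Hx; apply rel_prime_sym, Zpow_facts.rel_prime_Zpower_r; [lia|].
  apply rel_prime_sym, prime_rel_prime; [apply prime_2 | now apply odd_iff_not_2_divide].
Qed.

Lemma divide_mul_coprime a b n : rel_prime a b -> (a | n) -> (b | n) -> (a * b | n).
Proof.
  intros Hab [k ->] Hb.
  assert (Hbk : (b | k)) by (apply (Gauss b a); [rewrite Z.mul_comm | apply rel_prime_sym]; auto).
  destruct Hbk as [j ->]; exists j; ring.
Qed.

Lemma odd_part_decomposition a : 0 < a ->
  exists e m, a = 2 ^ Z.of_nat e * m /\ Z.odd m = true /\ 0 < m.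
Proof.
  remember (Z.to_nat a) as n eqn:Hn; revert a Hn.
  induction n as [n IH] using lt_wf_ind; intros a Hn Ha.
  destruct (Z.odd a) eqn:Hodd.
  - exists 0%nat, a; change (2 ^ Z.of_nat 0) with 1; repeat split; auto; lia.
  - assert (Ha2 : a = 2 * Z.div2 a) by (rewrite (Zdiv2_odd_eqn a) at 1; rewrite Hodd; lia).
    destruct (IH (Z.to_nat (Z.div2 a)) ltac:(lia) (Z.div2 a)) as (e & m & He & Hm & Hm0); try lia.
    exists (S e), m; rewrite Nat2Z.inj_succ, Z.pow_succ_r by lia; repeat split; auto; lia.
Qed.

Lemma prime_odd p : prime p -> 3 <= p -> Z.odd p = true.
Proof.
  intros Hp Hp3; apply odd_iff_not_2_divide; intros H2.
  destruct (prime_divisors p Hp 2 H2) as [|[|[|]]]; lia.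
Qed.

Lemma middle_coef_spec p a b : 0 < a -> In b (middle_coefs (- 4 * p) a) ->
  - a < b <= a /\ b = 2 * (b / 2) /\ (a | (b / 2) * (b / 2) + p).
Proof.
  intros Ha; unfold middle_coefs; rewrite filter_In, in_zrange, Z.eqb_eq, Z.mod_divide by lia.
  intros (Hb & k & Hk).
  assert (Heven : Z.odd b = false).
  { destruct (Z.odd b) eqn:Hodd; [|reflexivity]; exfalso.
    assert (H : Z.odd (b*b + 2*(2*p)) = true) by (rewrite Z.odd_add_mul_2, Z.odd_mul, Hodd; reflexivity).
    replace (b*b + 2*(2*p)) with (2 * (2*k*a)) in H by lia; rewrite Z.odd_even in H; discriminate. }
  assert (Hb2 : b = 2 * Z.div2 b) by (rewrite (Zdiv2_odd_eqn b) at 1; rewrite Heven; lia).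
  assert (Hhalf : b / 2 = Z.div2 b) by (rewrite Hb2 at 1; rewrite Z.mul_comm, Z.div_mul; lia).
  rewrite Hhalf; split; [lia | split; [exact Hb2 | exists k; nia]].
Qed.

Lemma odd_of_square_root_mod_even a β p :
  Z.odd p = true -> (2 | a) -> (a | β * β + p) -> Z.odd β = true.
Proof.
  intros Hp H2 Ha; destruct (Z.odd β) eqn:Hβ; [reflexivity|]; exfalso.
  apply (proj1 (odd_iff_not_2_divide (β * β + p))); [|eauto using Z.divide_trans].
  rewrite (Zdiv2_odd_eqn β), Hβ.
  replace ((2 * Z.div2 β + 0) * (2 * Z.div2 β + 0) + p) with (p + 2 * (2 * Z.div2 β * Z.div2 β)) by ring.
  rewrite Z.odd_add_mul_2; exact Hp.
Qed.

Lemma cofactor_gcd_divide m u v : 0 < m -> (m | u * v) -> (m / Z.gcd m u | v).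
Proof.
  intros Hm Hmuv.
  set (g := Z.gcd m u).
  assert (Hg : g <> 0) by (intros Hz; apply Z.gcd_eq_0 in Hz; lia).
  assert (Hcop : Z.gcd (m / g) (u / g) = 1) by (apply Z.gcd_div_gcd; auto).
  destruct (Z.gcd_divide_l m u) as [m' Hm'], (Z.gcd_divide_r m u) as [u' Hu']; fold g in Hm', Hu'.
  assert (Em : m / g = m') by (rewrite Hm'; apply Z.div_mul; exact Hg).
  assert (Eu : u / g = u') by (rewrite Hu'; apply Z.div_mul; exact Hg).
  rewrite Em in *; rewrite Eu in Hcop.
  apply (Gauss _ u'); [|now apply Zgcd_1_rel_prime].
  destruct Hmuv as [t Ht]; exists t; apply (Z.mul_reg_l _ _ g Hg).
  rewrite Hm', Hu' in Ht; nia.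
Qed.

(* The cofactor m / gcd(m, x - x0) divides x + x0 and is prime to gcd(m, x - x0), since a
   common divisor would divide both m and 2 x0. *)
Lemma odd_sqrt_determined_by_gcd m x0 x y : Z.odd m = true -> 0 < m -> rel_prime m x0 ->
  (m | (x - x0) * (x + x0)) -> (m | (y - x0) * (y + x0)) ->
  Z.gcd m (x - x0) = Z.gcd m (y - x0) -> (m | x - y).
Proof.
  intros Hodd Hm Hcop Hx Hy Hg.
  set (g := Z.gcd m (x - x0)) in *.
  assert (Hg0 : 0 < g).
  { assert (g <> 0) by (intros Hz; apply Z.gcd_eq_0 in Hz; lia). pose proof (Z.gcd_nonneg m (x - x0)); lia. }
  destruct (Z.gcd_divide_l m (x - x0)) as [m' Hm']; fold g in Hm'.
  assert (Hm'g : m / g = m') by (rewrite Hm'; apply Z.div_mul; lia).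
  assert (Hcx : (m' | x + x0)) by (rewrite <- Hm'g; now apply cofactor_gcd_divide).
  assert (Hcy : (m' | y + x0)) by (rewrite <- Hm'g, Hg; now apply cofactor_gcd_divide).
  assert (Hgx : (g | x - x0)) by apply Z.gcd_divide_r.
  assert (Hgy : (g | y - x0)) by (rewrite Hg; apply Z.gcd_divide_r).
  assert (Hgm' : rel_prime m' g).
  { constructor; [apply Z.divide_1_l | apply Z.divide_1_l|].
    intros d Hdm' Hdg.
    assert (Hdm : (d | m)) by (rewrite Hm'; now apply Z.divide_mul_l).
    assert (Hd2x0 : (d | 2 * x0)).
    { replace (2 * x0) with ((x + x0) - (x - x0)) by ring.
      apply Z.divide_sub_r; eauto using Z.divide_trans. }
    apply Hcop; [exact Hdm|].
    apply (Gauss _ 2); [exact Hd2x0|].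
    apply rel_prime_sym, prime_rel_prime; [apply prime_2|].
    intros H2d; apply (proj1 (odd_iff_not_2_divide m) Hodd); eauto using Z.divide_trans. }
  rewrite Hm'; apply divide_mul_coprime; [exact Hgm' | |].
  - replace (x - y) with ((x + x0) - (y + x0)) by ring; now apply Z.divide_sub_r.
  - replace (x - y) with ((x - x0) - (y - x0)) by ring; now apply Z.divide_sub_r.
Qed.

(* Since (β - β0) + (β + β0) = 2 β0 = 2 mod 4 for odd β, β0, one of the two factors of
   β^2 - β0^2 is divisible by 2^(e-1); this lists the resulting residues of β - β0 mod 2^e. *)
Definition two_adic_residues (e : nat) (β0 : Z) : list Z :=
  match e with
  | O | S O => 0 :: nil
  | S (S O) => 0 :: 2 :: nil
  | S (S (S k)) =>
      let Q := 2 ^ Z.of_nat (S (S k)) in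
      0 :: Q :: (- 2 * β0) mod (2 * Q) :: (Q - 2 * β0) mod (2 * Q) :: nil
  end.

Lemma mod_double_of_divide x Q : 0 < Q -> (Q | x) -> x mod (2 * Q) = 0 \/ x mod (2 * Q) = Q.
Proof.
  intros HQ [t ->]; rewrite (Zdiv2_odd_eqn t); destruct (Z.odd t).
  - right; replace ((2 * Z.div2 t + 1) * Q) with (Q + Z.div2 t * (2 * Q)) by ring.
    rewrite Z.mod_add, Z.mod_small; lia.
  - left; replace ((2 * Z.div2 t + 0) * Q) with (0 + Z.div2 t * (2 * Q)) by ring.
    rewrite Z.mod_add, Z.mod_0_l; lia.
Qed.

Lemma two_adic_residue_high k u v β0 : Z.odd β0 = true -> v = u + 2 * β0 -> (2 | u) ->
  (2 ^ Z.of_nat (S (S (S k))) | u * v) ->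
  In (u mod 2 ^ Z.of_nat (S (S (S k)))) (two_adic_residues (S (S (S k))) β0).
Proof.
  intros Hβ0 Hv [w ->] Hdiv.
  set (Q := 2 ^ Z.of_nat (S (S k))).
  assert (HQ : 2 ^ Z.of_nat (S (S (S k))) = 2 * Q)
    by (unfold Q; rewrite (Nat2Z.inj_succ (S (S k))), Z.pow_succ_r; lia).
  assert (HQ0 : 0 < Q) by (apply Z.pow_pos_nonneg; lia).
  rewrite HQ in *; cbn [two_adic_residues]; fold Q.
  destruct (Z.odd w) eqn:Hw.
  - assert (HQv : (Q | v)).
    { apply (Gauss _ w); [|now apply rel_prime_pow2_odd].
      destruct Hdiv as [t Ht]; exists t; lia. }
    replace (w * 2) with (v - 2 * β0) by lia; rewrite <- Zminus_mod_idemp_l.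
    destruct (mod_double_of_divide v Q HQ0 HQv) as [-> | ->].
    + right; right; left; f_equal; ring.
    + right; right; right; left; reflexivity.
  - assert (Hv' : v = 2 * (β0 + 2 * Z.div2 w)) by (rewrite (Zdiv2_odd_eqn w), Hw in Hv; lia).
    assert (HQu : (Q | w * 2)).
    { apply (Gauss _ (β0 + 2 * Z.div2 w)).
      - destruct Hdiv as [t Ht]; exists t; rewrite Hv' in Ht; lia.
      - apply rel_prime_pow2_odd; rewrite Z.odd_add_mul_2; exact Hβ0. }
    destruct (mod_double_of_divide (w * 2) Q HQ0 HQu) as [-> | ->]; [left | right; left]; reflexivity.
Qed.

Lemma two_adic_residue_in e β β0 : Z.odd β = true -> Z.odd β0 = true ->
  (2 ^ Z.of_nat (S e) | (β - β0) * (β + β0)) ->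
  In ((β - β0) mod 2 ^ Z.of_nat (S e)) (two_adic_residues (S e) β0).
Proof.
  intros Hβ Hβ0 Hdiv.
  assert (Heven : (2 | β - β0)).
  { rewrite (Zdiv2_odd_eqn β), (Zdiv2_odd_eqn β0), Hβ, Hβ0; exists (Z.div2 β - Z.div2 β0); ring. }
  destruct e as [|[|k]].
  - left; change (2 ^ Z.of_nat 1) with 2; symmetry; now apply Z.mod_divide.
  - change (2 ^ Z.of_nat 2) with 4; simpl.
    destruct Heven as [t ->]; rewrite (Zdiv2_odd_eqn t); destruct (Z.odd t); Z.div_mod_to_equations; lia.
  - apply (two_adic_residue_high k _ (β + β0)); auto; ring.
Qed.

Definition divides_ind (d a : Z) : Z := if a mod d =? 0 then 1 else 0.

Lemma divides_ind_cases d a : d <> 0 ->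
  ((d | a) /\ divides_ind d a = 1) \/ (~ (d | a) /\ divides_ind d a = 0).
Proof.
  intros Hd; unfold divides_ind; rewrite <- (Z.mod_divide a d Hd).
  destruct (Z.eqb_spec (a mod d) 0); auto.
Qed.

Lemma divides_ind_of_divide d a : d <> 0 -> (d | a) -> divides_ind d a = 1.
Proof. intros Hd Hda; destruct (divides_ind_cases d a Hd); tauto. Qed.

Lemma divides_ind_bounds d a : 0 <= divides_ind d a <= 1.
Proof. unfold divides_ind; destruct (_ =? _); lia. Qed.

(* The number 1, 1, 2, 4 of square roots of an odd square modulo 2^e, e = 0, 1, 2, >= 3. *)
Definition two_adic_weight (a : Z) : Z := 1 + divides_ind 4 a + 2 * divides_ind 8 a.

Lemma length_two_adic_residues e β0 m :
  (length (two_adic_residues e β0) <= Z.to_nat (two_adic_weight (2 ^ Z.of_nat e * m)))%nat.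
Proof.
  unfold two_adic_weight.
  pose proof (divides_ind_bounds 4 (2 ^ Z.of_nat e * m)).
  pose proof (divides_ind_bounds 8 (2 ^ Z.of_nat e * m)).
  destruct e as [|[|[|k]]]; simpl length; try lia.
  - rewrite (divides_ind_of_divide 4); [lia | lia | exists m; change (2 ^ Z.of_nat 2) with 4; ring].
  - rewrite (divides_ind_of_divide 4), (divides_ind_of_divide 8); try lia.
    all: rewrite !Nat2Z.inj_succ, !Z.pow_succ_r by lia.
    + exists (2 ^ Z.of_nat k * m); ring.
    + exists (2 * 2 ^ Z.of_nat k * m); ring.
Qed.

Definition odd_divisors (N a : Z) : list Z :=
  filter (fun g => andb (Z.odd g) (a mod g =? 0)) (zrange 1 (Z.to_nat N)).

Section MiddleCoefficients.

Variables (p a N : Z) (e : nat) (m b0 : Z).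
Hypotheses (Hp : prime p) (Hp_odd : Z.odd p = true) (Ha : 1 <= a < p) (HaN : a <= N)
  (Ha_split : a = 2 ^ Z.of_nat e * m) (Hm_odd : Z.odd m = true) (Hm : 0 < m)
  (Hb0 : In b0 (middle_coefs (- 4 * p) a)).

Let β0 := b0 / 2.

(* Two middle coefficients b = 2 β with the same signature are congruent modulo both the
   odd part m and the 2-part 2^e of a, hence equal as they lie in (-a, a]. *)
Definition root_signature (b : Z) : Z * Z :=
  (Z.gcd m (b / 2 - β0), (b / 2 - β0) mod 2 ^ Z.of_nat e).

Lemma rel_prime_half_root : rel_prime a β0.
Proof.
  destruct (middle_coef_spec p a b0 ltac:(lia) Hb0) as (_ & _ & Hdiv).
  constructor; [apply Z.divide_1_l | apply Z.divide_1_l |]; intros d Hda Hdβ0.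
  destruct (rel_prime_le_prime a p Hp ltac:(lia)) as [_ _ Hap]; apply Hap; [exact Hda|].
  replace p with ((β0 * β0 + p) - β0 * β0) by ring.
  apply Z.divide_sub_r; [eauto using Z.divide_trans | now apply Z.divide_mul_l].
Qed.

Lemma divide_diff_squares β : (a | β * β + p) -> (a | (β - β0) * (β + β0)).
Proof.
  destruct (middle_coef_spec p a b0 ltac:(lia) Hb0) as (_ & _ & Hdiv); intros Hβ.
  replace ((β - β0) * (β + β0)) with ((β * β + p) - (β0 * β0 + p)) by ring.
  now apply Z.divide_sub_r.
Qed.

Lemma odd_of_half_middle_coef b : (2 | a) -> In b (middle_coefs (- 4 * p) a) -> Z.odd (b / 2) = true.
Proof.
  intros H2a Hb; destruct (middle_coef_spec p a b ltac:(lia) Hb) as (_ & _ & Hdiv).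
  exact (odd_of_square_root_mod_even a _ p Hp_odd H2a Hdiv).
Qed.

Lemma root_signature_injective b1 b2 :
  In b1 (middle_coefs (- 4 * p) a) -> In b2 (middle_coefs (- 4 * p) a) ->
  root_signature b1 = root_signature b2 -> b1 = b2.
Proof.
  intros Hb1 Hb2 Hsig; injection Hsig as Hgcd Hres.
  destruct (middle_coef_spec p a b1 ltac:(lia) Hb1) as (Hr1 & He1 & Hd1).
  destruct (middle_coef_spec p a b2 ltac:(lia) Hb2) as (Hr2 & He2 & Hd2).
  assert (Hma : (m | a)) by (exists (2 ^ Z.of_nat e); lia).
  assert (Hodd : (m | b1 / 2 - b2 / 2)).
  { apply (odd_sqrt_determined_by_gcd m β0); auto.
    - apply (rel_prime_div a); [exact rel_prime_half_root | exact Hma].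
    - apply (Z.divide_trans _ a); [exact Hma | now apply divide_diff_squares].
    - apply (Z.divide_trans _ a); [exact Hma | now apply divide_diff_squares]. }
  assert (Htwo : (2 ^ Z.of_nat e | b1 / 2 - b2 / 2)).
  { apply Z.cong_iff_ex in Hres as [n Hn]; exists n; lia. }
  assert (Hdiv : (a | b1 / 2 - b2 / 2)).
  { rewrite Ha_split; apply divide_mul_coprime; auto using rel_prime_pow2_odd. }
  destruct Hdiv as [t Ht]; assert (t = 0) by nia; lia.
Qed.

Lemma root_signature_in b : In b (middle_coefs (- 4 * p) a) ->
  In (root_signature b) (list_prod (odd_divisors N a) (two_adic_residues e β0)).
Proof.
  intros Hb; destruct (middle_coef_spec p a b ltac:(lia) Hb) as (Hr & He & Hd).
  apply in_prod_iff; split.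
  - set (g := Z.gcd m (b / 2 - β0)).
    assert (Hgm : (g | m)) by apply Z.gcd_divide_l.
    assert (Hma : (m | a)) by (exists (2 ^ Z.of_nat e); lia).
    assert (Hg : 0 < g).
    { assert (g <> 0) by (intros Hz; apply Z.gcd_eq_0 in Hz; lia). pose proof (Z.gcd_nonneg m (b / 2 - β0)); lia. }
    assert (g <= m) by (apply Z.divide_pos_le; auto).
    assert (m <= a) by (apply Z.divide_pos_le; auto; lia).
    unfold odd_divisors; apply filter_In; rewrite in_zrange; split; [lia|].
    apply Bool.andb_true_iff; split; [eauto using odd_of_divide|].
    apply Z.eqb_eq, Z.mod_divide; [lia | eauto using Z.divide_trans].
  - destruct e as [|e'] eqn:He'.
    + left; symmetry; apply Z.mod_1_r.
    + assert (H2a : (2 | a)) by (exists (2 ^ Z.of_nat e' * m); rewrite Ha_split, Nat2Z.inj_succ, Z.pow_succ_r; lia).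
      apply two_adic_residue_in; try apply odd_of_half_middle_coef; auto.
      apply (Z.divide_trans _ a); [exists m; lia | now apply divide_diff_squares].
Qed.

End MiddleCoefficients.

Lemma length_middle_coefs_le p a N : prime p -> Z.odd p = true -> 1 <= a < p -> a <= N ->
  (length (middle_coefs (- 4 * p) a) <= Z.to_nat (two_adic_weight a) * length (odd_divisors N a))%nat.
Proof.
  intros Hp Hp_odd Ha HaN.
  destruct (middle_coefs (- 4 * p) a) as [|b0 bs] eqn:Hcoefs; [simpl; lia|].
  rewrite <- Hcoefs.
  assert (Hb0 : In b0 (middle_coefs (- 4 * p) a)) by (rewrite Hcoefs; now left).
  destruct (odd_part_decomposition a ltac:(lia)) as (e & m & Ha_split & Hm_odd & Hm).
  eapply Nat.le_trans.
  - apply (length_le_of_injective _ (list_prod (odd_divisors N a) (two_adic_residues e (b0 / 2)))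
             (root_signature e m b0)).
    + apply NoDup_filter, NoDup_zrange.
    + intros b1 b2; eapply root_signature_injective; eauto.
    + intros b; eapply root_signature_in; eauto.
  - rewrite length_prod, Nat.mul_comm; apply Nat.mul_le_mono_r.
    rewrite Ha_split; apply length_two_adic_residues.
Qed.

(** * The weighted divisor sum *)

Definition zsum (f : Z -> Z) (l : list Z) : Z := fold_right (fun x acc => f x + acc) 0 l.

Lemma zsum_app f l1 l2 : zsum f (l1 ++ l2) = zsum f l1 + zsum f l2.
Proof. induction l1 as [|x l IH]; simpl; [reflexivity|]; unfold zsum in *; simpl; lia. Qed.

Lemma zsum_ext f g l : (forall x, In x l -> f x = g x) -> zsum f l = zsum g l.
Proof.
  induction l as [|x l IH]; intros H; [reflexivity|].
  unfold zsum in *; simpl; rewrite H, IH; auto with datatypes.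
Qed.

Lemma zsum_le f g l : (forall x, In x l -> f x <= g x) -> zsum f l <= zsum g l.
Proof.
  induction l as [|x l IH]; intros H; unfold zsum in *; simpl; [lia|].
  pose proof (H x (or_introl eq_refl)); pose proof (IH (fun y Hy => H y (or_intror Hy))); lia.
Qed.

Lemma zsum_add f g l : zsum (fun x => f x + g x) l = zsum f l + zsum g l.
Proof. induction l as [|x l IH]; unfold zsum in *; simpl; lia. Qed.

Lemma zsum_scale c f l : zsum (fun x => c * f x) l = c * zsum f l.
Proof. induction l as [|x l IH]; unfold zsum in *; simpl; [ring|]; rewrite IH; ring. Qed.

Lemma zsum_0 l : zsum (fun _ => 0) l = 0.
Proof. induction l as [|x l IH]; [reflexivity | exact IH]. Qed.

Lemma zsum_comm (h : Z -> Z -> Z) l1 l2 :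
  zsum (fun x => zsum (fun y => h x y) l2) l1 = zsum (fun y => zsum (fun x => h x y) l1) l2.
Proof.
  induction l1 as [|x l1 IH]; [symmetry; apply zsum_0|].
  change (zsum (fun y => h x y) l2 + zsum (fun x => zsum (fun y => h x y) l2) l1 =
          zsum (fun y => h x y + zsum (fun x => h x y) l1) l2).
  rewrite IH, zsum_add; reflexivity.
Qed.

Lemma length_filter_zsum (P : Z -> bool) l :
  Z.of_nat (length (filter P l)) = zsum (fun x => if P x then 1 else 0) l.
Proof.
  induction l as [|x l IH]; [reflexivity|].
  change (zsum _ (x :: l)) with ((if P x then 1 else 0) + zsum (fun x => if P x then 1 else 0) l).
  simpl filter; destruct (P x); [simpl length; rewrite Nat2Z.inj_succ|]; lia.
Qed.

Lemma list_sum_map_zsum (f : Z -> nat) l :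
  Z.of_nat (list_sum (map f l)) = zsum (fun x => Z.of_nat (f x)) l.
Proof. induction l as [|x l IH]; [reflexivity|]; simpl; rewrite Nat2Z.inj_add, IH; reflexivity. Qed.

Lemma div_add_1 n d : 0 <= n -> 0 < d -> (n + 1) / d = n / d + divides_ind d (n + 1).
Proof.
  intros Hn Hd; unfold divides_ind.
  pose proof (Z.div_mod n d ltac:(lia)); pose proof (Z.mod_pos_bound n d Hd).
  destruct (Z.eq_dec (n mod d) (d - 1)) as [E | E].
  - rewrite <- (Z.mod_unique_pos (n + 1) d (n / d + 1) 0) by lia; simpl.
    symmetry; apply Z.div_unique_pos with 0; lia.
  - rewrite <- (Z.mod_unique_pos (n + 1) d (n / d) (n mod d + 1)) by lia.
    destruct (Z.eqb_spec (n mod d + 1) 0); [lia|].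
    symmetry; apply Z.div_unique_pos with (n mod d + 1); lia.
Qed.

Lemma zsum_divides_ind d n : 0 < d -> zsum (divides_ind d) (zrange 1 n) = Z.of_nat n / d.
Proof.
  intros Hd; induction n as [|n IH]; [reflexivity|].
  rewrite zrange_S, zsum_app, IH, Nat2Z.inj_succ, <- Z.add_1_r, div_add_1 by lia.
  unfold zsum; cbn [fold_right]; rewrite Z.add_0_r, (Z.add_comm 1); reflexivity.
Qed.

Lemma divides_ind_mul_coprime c g a : rel_prime c g -> c <> 0 -> g <> 0 ->
  divides_ind (c * g) a = divides_ind c a * divides_ind g a.
Proof.
  intros Hcop Hc Hg.
  destruct (divides_ind_cases (c * g) a ltac:(lia)) as [[H E] | [H E]],
    (divides_ind_cases c a Hc) as [[Hca Ec] | [Hca Ec]],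
    (divides_ind_cases g a Hg) as [[Hga Eg] | [Hga Eg]];
    rewrite E, Ec, Eg; try reflexivity; exfalso.
  all: try (apply H; now apply divide_mul_coprime).
  all: try (apply Hca; apply (Z.divide_trans _ (c * g)); [apply Z.divide_factor_l | exact H]).
  all: apply Hga; apply (Z.divide_trans _ (c * g)); [apply Z.divide_factor_r | exact H].
Qed.

Definition weighted_odd_divisor_count (X : Z) : Z :=
  zsum (fun a => two_adic_weight a * Z.of_nat (length (odd_divisors X a))) (zrange 1 (Z.to_nat X)).

Lemma length_candidate_forms_le p X : prime p -> Z.odd p = true -> X < p ->
  Z.of_nat (length (candidate_forms (- 4 * p) X)) <= weighted_odd_divisor_count X.
Proof.
  intros Hp Hp_odd HXp.
  unfold candidate_forms; rewrite length_flat_map, list_sum_map_zsum.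
  apply zsum_le; intros a Ha%in_zrange; rewrite length_map.
  pose proof (length_middle_coefs_le p a X Hp Hp_odd ltac:(lia) ltac:(lia)) as Hle.
  assert (0 <= two_adic_weight a) by (unfold two_adic_weight; pose proof (divides_ind_bounds 4 a);
                                     pose proof (divides_ind_bounds 8 a); lia).
  apply inj_le in Hle; rewrite Nat2Z.inj_mul, Z2Nat.id in Hle; lia.
Qed.

Lemma two_adic_weight_mul_divides_ind g a : Z.odd g = true ->
  two_adic_weight a * divides_ind g a = divides_ind g a + divides_ind (4 * g) a + 2 * divides_ind (8 * g) a.
Proof.
  intros Hg; assert (Hg0 : g <> 0) by (intros ->; discriminate).
  rewrite (divides_ind_mul_coprime 4), (divides_ind_mul_coprime 8) by
    (try lia; exact (rel_prime_pow2_odd 2 g Hg) || exact (rel_prime_pow2_odd 3 g Hg)).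
  unfold two_adic_weight; ring.
Qed.

(* Exchanging the order of summation: the odd g count the multiples a <= X of g, 4 g and 8 g. *)
Lemma weighted_odd_divisor_count_eq X : 0 <= X ->
  weighted_odd_divisor_count X =
  zsum (fun g => if Z.odd g then X / g + X / (4 * g) + 2 * (X / (8 * g)) else 0) (zrange 1 (Z.to_nat X)).
Proof.
  intros HX; unfold weighted_odd_divisor_count.
  transitivity (zsum (fun a => zsum (fun g => if Z.odd g then two_adic_weight a * divides_ind g a else 0)
                                    (zrange 1 (Z.to_nat X))) (zrange 1 (Z.to_nat X))).
  - apply zsum_ext; intros a _; unfold odd_divisors; rewrite length_filter_zsum, <- zsum_scale.
    apply zsum_ext; intros g _; unfold divides_ind; destruct (Z.odd g), (a mod g =? 0); simpl; ring.
  - rewrite zsum_comm; apply zsum_ext; intros g Hg%in_zrange.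
    destruct (Z.odd g) eqn:Hodd; [|apply zsum_0].
    erewrite zsum_ext by (intros a _; exact (two_adic_weight_mul_divides_ind g a Hodd)).
    rewrite !zsum_add, zsum_scale, !zsum_divides_ind, Z2Nat.id by lia; reflexivity.
Qed.

(** * Analytic estimates *)

Close Scope Z_scope.
Open Scope R_scope.

Lemma ln_1_plus_ge x : 0 < x -> 2 * x / (2 + x) <= ln (1 + x).
Proof.
  intros Hx.
  set (f := fun t => ln (1 + t) - 2 * t / (2 + t)).
  set (f' := fun t => t * t / ((1 + t) * ((2 + t) * (2 + t)))).
  destruct (MVT_cor2 f f' 0 x Hx) as (c & Hc & Hcx).
  - intros c Hc; apply is_derive_Reals; unfold f, f'.
    auto_derive; [lra | field; lra].
  - assert (0 <= f' c * (x - 0)).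
    { unfold f'; apply Rmult_le_pos; [|lra].
      apply Rmult_le_pos; [nra | apply Rlt_le, Rinv_0_lt_compat; apply Rmult_lt_0_compat; nra]. }
    assert (Hf0 : f 0 = 0) by (unfold f; replace (1 + 0) with 1 by lra; rewrite ln_1; field).
    unfold f in Hc, Hf0; lra.
Qed.

Lemma ln_1_plus_le x : 0 < x -> ln (1 + x) <= x * (2 + x) / (2 * (1 + x)).
Proof.
  intros Hx.
  set (f := fun t => t * (2 + t) / (2 * (1 + t)) - ln (1 + t)).
  set (f' := fun t => t * t / (2 * ((1 + t) * (1 + t)))).
  destruct (MVT_cor2 f f' 0 x Hx) as (c & Hc & Hcx).
  - intros c Hc; apply is_derive_Reals; unfold f, f'.
    auto_derive; [lra | field; lra].
  - assert (0 <= f' c * (x - 0)).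
    { unfold f'; apply Rmult_le_pos; [|lra].
      apply Rmult_le_pos; [nra | apply Rlt_le, Rinv_0_lt_compat; nra]. }
    assert (Hf0 : f 0 = 0) by (unfold f; replace (1 + 0) with 1 by lra; rewrite ln_1; field).
    unfold f in Hc, Hf0; lra.
Qed.

Lemma ln_succ_sub_ge k : 0 < k -> 2 / (2 * k + 1) <= ln (k + 1) - ln k.
Proof.
  intros Hk; rewrite <- ln_div by lra.
  replace ((k + 1) / k) with (1 + / k) by (field; lra).
  replace (2 / (2 * k + 1)) with (2 * / k / (2 + / k)) by (field; lra).
  apply ln_1_plus_ge, Rinv_0_lt_compat; lra.
Qed.

Lemma ln_succ_sub_le k : 0 < k -> ln (k + 1) - ln k <= (2 * k + 1) / (2 * k * (k + 1)).
Proof.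
  intros Hk; rewrite <- ln_div by lra.
  replace ((k + 1) / k) with (1 + / k) by (field; lra).
  replace ((2 * k + 1) / (2 * k * (k + 1))) with (/ k * (2 + / k) / (2 * (1 + / k))) by (field; lra).
  apply ln_1_plus_le, Rinv_0_lt_compat; lra.
Qed.

Lemma ln_1_plus_le_id x : 0 < x -> ln (1 + x) <= x.
Proof. intros Hx; rewrite <- (ln_exp x) at 2; apply ln_le; [lra | apply exp_ineq1_le]. Qed.

Lemma ln_2_bounds : 0.6926 <= ln 2 <= 0.6942.
Proof.
  assert (E : ln 2 = ln 16 - ln 8) by (replace 16 with (2 * 8) by lra; rewrite ln_mult by lra; ring).
  pose proof (ln_succ_sub_ge 8); pose proof (ln_succ_sub_le 8).
  pose proof (ln_succ_sub_ge 9); pose proof (ln_succ_sub_le 9).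
  pose proof (ln_succ_sub_ge 10); pose proof (ln_succ_sub_le 10).
  pose proof (ln_succ_sub_ge 11); pose proof (ln_succ_sub_le 11).
  pose proof (ln_succ_sub_ge 12); pose proof (ln_succ_sub_le 12).
  pose proof (ln_succ_sub_ge 13); pose proof (ln_succ_sub_le 13).
  pose proof (ln_succ_sub_ge 14); pose proof (ln_succ_sub_le 14).
  pose proof (ln_succ_sub_ge 15); pose proof (ln_succ_sub_le 15).
  replace (8 + 1) with 9 in * by lra; replace (9 + 1) with 10 in * by lra;
  replace (10 + 1) with 11 in * by lra; replace (11 + 1) with 12 in * by lra;
  replace (12 + 1) with 13 in * by lra; replace (13 + 1) with 14 in * by lra;
  replace (14 + 1) with 15 in * by lra; replace (15 + 1) with 16 in * by lra.
  rewrite E; split; lra.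
Qed.

Lemma ln_3_bounds : 1.09 <= ln 3 <= 1.1005.
Proof.
  assert (E : ln 3 = ln 12 - ln 8 + ln 2).
  { replace 12 with (3 * 2 * 2) by lra; replace 8 with (2 * 2 * 2) by lra.
    rewrite !ln_mult by lra; ring. }
  pose proof (ln_succ_sub_ge 8); pose proof (ln_succ_sub_le 8).
  pose proof (ln_succ_sub_ge 9); pose proof (ln_succ_sub_le 9).
  pose proof (ln_succ_sub_ge 10); pose proof (ln_succ_sub_le 10).
  pose proof (ln_succ_sub_ge 11); pose proof (ln_succ_sub_le 11).
  replace (8 + 1) with 9 in * by lra; replace (9 + 1) with 10 in * by lra;
  replace (10 + 1) with 11 in * by lra; replace (11 + 1) with 12 in * by lra.
  pose proof ln_2_bounds; rewrite E; split; lra.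
Qed.

(* cos is positive below PI / 2, and the alternating Taylor bound gives cos 1.575 < 0. *)
Lemma PI_le_3_15 : PI <= 3.15.
Proof.
  destruct (Rle_or_lt PI 3.15) as [H | H]; [exact H | exfalso].
  assert (Hc : 0 < cos 1.575) by (apply cos_gt_0; lra).
  destruct (pre_cos_bound 1.575 1 ltac:(lra) ltac:(lra)) as [_ Hb].
  change (2 * (1 + 1))%nat with 4%nat in Hb.
  unfold cos_approx, cos_term in Hb; cbv beta iota delta [sum_f_R0] in Hb.
  replace (INR (Factorial.fact (2 * 0))) with 1 in Hb by reflexivity.
  replace (INR (Factorial.fact (2 * 1))) with 2 in Hb by (simpl; lra).
  replace (INR (Factorial.fact (2 * 2))) with 24 in Hb by (rewrite INR_IZR_INZ; reflexivity).
  replace (INR (Factorial.fact (2 * 3))) with 720 in Hb by (rewrite INR_IZR_INZ; reflexivity).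
  replace (INR (Factorial.fact (2 * 4))) with 40320 in Hb by (rewrite INR_IZR_INZ; reflexivity).
  simpl pow in Hb; lra.
Qed.

Lemma sqrt_3_ge : 1.732 <= sqrt 3.
Proof. rewrite <- (sqrt_square 1.732) by lra; apply sqrt_le_1_alt; lra. Qed.

Definition rsum (f : Z -> R) (l : list Z) : R := fold_right (fun x acc => f x + acc) 0 l.

Lemma rsum_app f l1 l2 : rsum f (l1 ++ l2) = rsum f l1 + rsum f l2.
Proof. induction l1 as [|x l IH]; unfold rsum in *; simpl; [ring | rewrite IH; ring]. Qed.

Lemma rsum_le f g l : (forall x, In x l -> f x <= g x) -> rsum f l <= rsum g l.
Proof.
  induction l as [|x l IH]; intros H; unfold rsum in *; simpl; [lra|].
  pose proof (H x (or_introl eq_refl)); pose proof (IH (fun y Hy => H y (or_intror Hy))); lra.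
Qed.

Lemma rsum_add f g l : rsum (fun x => f x + g x) l = rsum f l + rsum g l.
Proof. induction l as [|x l IH]; unfold rsum in *; simpl; [ring | rewrite IH; ring]. Qed.

Lemma rsum_scale c f l : rsum (fun x => c * f x) l = c * rsum f l.
Proof. induction l as [|x l IH]; unfold rsum in *; simpl; [ring | rewrite IH; ring]. Qed.

Lemma IZR_zsum f l : IZR (zsum f l) = rsum (fun x => IZR (f x)) l.
Proof. induction l as [|x l IH]; [reflexivity|]; unfold zsum, rsum in *; simpl; rewrite plus_IZR, IH; reflexivity. Qed.

Definition odd_harmonic (M : nat) : R := rsum (fun g => if Z.odd g then / IZR g else 0) (zrange 1 M).

Lemma odd_harmonic_S M :
  odd_harmonic (S M) = odd_harmonic M + (if Z.odd (1 + Z.of_nat M) then / IZR (1 + Z.of_nat M) else 0).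
Proof. unfold odd_harmonic; rewrite zrange_S, rsum_app; unfold rsum at 2; simpl; ring. Qed.

Lemma odd_harmonic_double_le j : (1 <= j)%nat -> odd_harmonic (2 * j) <= 1 + ln (INR j) / 2.
Proof.
  induction j as [|j IH]; intros Hj; [lia|].
  destruct j as [|j].
  - unfold odd_harmonic, rsum; simpl; rewrite ln_1; lra.
  - replace (2 * S (S j))%nat with (S (S (2 * S j))) by lia.
    rewrite !odd_harmonic_S.
    replace (Z.of_nat (S (2 * S j))) with (1 + Z.of_nat (2 * S j))%Z by lia.
    assert (Hodd : Z.odd (1 + Z.of_nat (2 * S j)) = true)
      by (rewrite Nat2Z.inj_mul; apply Z.odd_add_mul_2).
    assert (Heven : Z.odd (1 + (1 + Z.of_nat (2 * S j))) = false)
      by (replace (1 + (1 + Z.of_nat (2 * S j)))%Z with (2 * (1 + Z.of_nat (S j)))%Z by lia; apply Z.odd_even).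
    rewrite Hodd, Heven.
    assert (E : IZR (1 + Z.of_nat (2 * S j)) = 2 * INR (S j) + 1)
      by (rewrite plus_IZR, <- INR_IZR_INZ, mult_INR; simpl (INR 2); lra).
    pose proof (IH ltac:(lia)).
    pose proof (ln_succ_sub_ge (INR (S j)) ltac:(apply lt_0_INR; lia)) as Hstep.
    rewrite <- S_INR in Hstep; rewrite E; unfold Rdiv in *; lra.
Qed.

Lemma odd_harmonic_le M : (1 <= M)%nat -> odd_harmonic M <= 1 + ln ((INR M + 1) / 2) / 2.
Proof.
  intros HM; destruct (Nat.Even_or_Odd M) as [[j ->] | [j ->]].
  - pose proof (odd_harmonic_double_le j ltac:(lia)).
    assert (ln (INR j) <= ln ((INR (2 * j) + 1) / 2)).
    { apply ln_le; [apply lt_0_INR; lia|]; rewrite mult_INR; simpl (INR 2); lra. }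
    lra.
  - pose proof (odd_harmonic_double_le (S j) ltac:(lia)) as H.
    replace (2 * S j)%nat with (S (2 * j + 1)) in H by lia.
    rewrite odd_harmonic_S in H.
    replace (1 + Z.of_nat (2 * j + 1))%Z with (2 * (1 + Z.of_nat j))%Z in H by lia.
    rewrite Z.odd_even, Rplus_0_r in H.
    replace ((INR (2 * j + 1) + 1) / 2) with (INR (S j)); [lra|].
    rewrite plus_INR, mult_INR, S_INR; simpl (INR 2); simpl (INR 1); field.
Qed.

Lemma odd_harmonic_le_IZR X : (1 <= X)%Z -> odd_harmonic (Z.to_nat X) <= 1 + ln ((IZR X + 1) / 2) / 2.
Proof.
  intros HX; rewrite <- (Z2Nat.id X) at 2 by lia; rewrite <- INR_IZR_INZ.
  apply odd_harmonic_le; lia.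
Qed.

Lemma IZR_div_le X d : (0 < d)%Z -> (0 <= X)%Z -> IZR (X / d) <= IZR X / IZR d.
Proof.
  intros Hd HX; pose proof (Z.mul_div_le X d Hd) as H.
  apply IZR_le in H; rewrite mult_IZR in H.
  assert (0 < IZR d) by (apply IZR_lt; lia).
  apply (Rmult_le_reg_l (IZR d)); [lra|]; field_simplify; lra.
Qed.

Lemma odd_harmonic_div_le X c : (0 < c)%Z -> (c <= X)%Z ->
  odd_harmonic (Z.to_nat (X / c)) <= 1 + ln ((IZR X / IZR c + 1) / 2) / 2.
Proof.
  intros Hc HcX.
  assert (H1 : (1 <= X / c)%Z) by (apply Z.div_le_lower_bound; lia).
  eapply Rle_trans; [apply odd_harmonic_le_IZR; exact H1|].
  pose proof (IZR_div_le X c Hc ltac:(lia)).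
  assert (1 <= IZR (X / c)) by (apply IZR_le; lia).
  assert (ln ((IZR (X / c) + 1) / 2) <= ln ((IZR X / IZR c + 1) / 2)) by (apply ln_le; lra).
  lra.
Qed.

Lemma odd_harmonic_truncate (M : Z) N : (0 <= M)%Z ->
  rsum (fun g => if (Z.odd g && (g <=? M)%Z)%bool then / IZR g else 0) (zrange 1 N) =
  odd_harmonic (Nat.min N (Z.to_nat M)).
Proof.
  intros HM; induction N as [|N IH]; [reflexivity|].
  rewrite zrange_S, rsum_app, IH; unfold rsum; cbn [fold_right]; rewrite Rplus_0_r.
  destruct (Z.leb_spec (1 + Z.of_nat N) M) as [H | H].
  - replace (Nat.min (S N) (Z.to_nat M)) with (S N) by lia.
    replace (Nat.min N (Z.to_nat M)) with N by lia.
    rewrite odd_harmonic_S; destruct (Z.odd (1 + Z.of_nat N)); reflexivity.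
  - replace (Nat.min (S N) (Z.to_nat M)) with (Nat.min N (Z.to_nat M)) by lia.
    rewrite Bool.andb_false_r; ring.
Qed.

Lemma IZR_div_mul_le X c g : (0 < c)%Z -> (0 < g)%Z -> (0 <= X)%Z ->
  IZR (X / (c * g)) <= IZR X / IZR c * (if (g <=? X / c)%Z then / IZR g else 0).
Proof.
  intros Hc Hg HX; destruct (Z.leb_spec g (X / c)) as [H | H].
  - rewrite (IZR_div_le X (c * g)) by lia; rewrite mult_IZR.
    assert (0 < IZR c) by (apply IZR_lt; lia); assert (0 < IZR g) by (apply IZR_lt; lia).
    right; field; lra.
  - rewrite Z.div_small; [rewrite Rmult_0_r; lra|].
    pose proof (Z.mul_div_le X c Hc); pose proof (Z.mod_pos_bound X c Hc).
    pose proof (Z.div_mod X c ltac:(lia)); nia.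
Qed.

Lemma weighted_odd_divisor_count_le X : (8 <= X)%Z ->
  IZR (weighted_odd_divisor_count X) <=
  IZR X * odd_harmonic (Z.to_nat X) + IZR X / 4 * odd_harmonic (Z.to_nat (X / 4))
  + IZR X / 4 * odd_harmonic (Z.to_nat (X / 8)).
Proof.
  intros HX; rewrite weighted_odd_divisor_count_eq, IZR_zsum by lia.
  eapply Rle_trans.
  - apply rsum_le with (g := fun g => IZR X * (if Z.odd g then / IZR g else 0)
       + IZR X / 4 * (if (Z.odd g && (g <=? X / 4)%Z)%bool then / IZR g else 0)
       + IZR X / 4 * (if (Z.odd g && (g <=? X / 8)%Z)%bool then / IZR g else 0)).
    intros g Hg%in_zrange; destruct (Z.odd g); simpl andb; [|lra].
    rewrite !plus_IZR, mult_IZR.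
    pose proof (IZR_div_le X g ltac:(lia) ltac:(lia)).
    pose proof (IZR_div_mul_le X 4 g ltac:(lia) ltac:(lia) ltac:(lia)).
    pose proof (IZR_div_mul_le X 8 g ltac:(lia) ltac:(lia) ltac:(lia)).
    assert (0 < IZR g) by (apply IZR_lt; lia).
    assert (IZR X / IZR g = IZR X * / IZR g) by reflexivity.
    assert (2 * (IZR X / 8) = IZR X / 4) by field.
    destruct (g <=? X / 8)%Z, (g <=? X / 4)%Z; nra.
  - rewrite !rsum_add, !rsum_scale, !odd_harmonic_truncate by (apply Z.div_pos; lia).
    fold (odd_harmonic (Z.to_nat X)).
    assert (X / 4 <= X)%Z by (apply Z.div_le_upper_bound; lia).
    assert (X / 8 <= X)%Z by (apply Z.div_le_upper_bound; lia).
    replace (Nat.min (Z.to_nat X) (Z.to_nat (X / 4))) with (Z.to_nat (X / 4)) by lia.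
    replace (Nat.min (Z.to_nat X) (Z.to_nat (X / 8))) with (Z.to_nat (X / 8)) by lia.
    lra.
Qed.

Lemma ln_add_le x c : 32 <= x -> 0 < c -> ln (x + c) <= ln x + c / 32.
Proof.
  intros Hx Hc.
  replace (x + c) with (x * (1 + c / x)) by (field; lra).
  assert (0 < c / x) by (apply Rdiv_lt_0_compat; lra).
  rewrite ln_mult by lra.
  pose proof (ln_1_plus_le_id (c / x) ltac:(assumption)).
  assert (c / x <= c / 32) by (unfold Rdiv; apply Rmult_le_compat_l; [lra | apply Rinv_le_contravar; lra]).
  lra.
Qed.

Lemma harmonic_bound_le x : 32 <= x ->
  x * (1 + ln ((x + 1) / 2) / 2) + x / 4 * (1 + ln ((x / 4 + 1) / 2) / 2)
  + x / 4 * (1 + ln ((x / 8 + 1) / 2) / 2)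
  <= 0.4123 * x * (2 * ln x + 5 - 4 * ln 2 - ln 3).
Proof.
  intros Hx; pose proof ln_2_bounds; pose proof ln_3_bounds.
  assert (E8 : ln 8 = 3 * ln 2) by (replace 8 with (2 * 2 * 2) by lra; rewrite !ln_mult by lra; ring).
  assert (E16 : ln 16 = 4 * ln 2) by (replace 16 with (2 * 2 * 2 * 2) by lra; rewrite !ln_mult by lra; ring).
  assert (E32 : ln 32 = 5 * ln 2) by (replace 32 with (2 * 2 * 2 * 2 * 2) by lra; rewrite !ln_mult by lra; ring).
  assert (T1 : ln ((x + 1) / 2) <= ln x + 1 / 32 - ln 2).
  { rewrite ln_div by lra; pose proof (ln_add_le x 1 Hx ltac:(lra)); lra. }
  assert (T4 : ln ((x / 4 + 1) / 2) <= ln x + 4 / 32 - 3 * ln 2).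
  { replace ((x / 4 + 1) / 2) with ((x + 4) / 8) by field.
    rewrite ln_div by lra; pose proof (ln_add_le x 4 Hx ltac:(lra)); lra. }
  assert (T8 : ln ((x / 8 + 1) / 2) <= ln x + 8 / 32 - 4 * ln 2).
  { replace ((x / 8 + 1) / 2) with ((x + 8) / 16) by field.
    rewrite ln_div by lra; pose proof (ln_add_le x 8 Hx ltac:(lra)); lra. }
  assert (HL : 5 * ln 2 <= ln x) by (rewrite <- E32; apply ln_le; lra).
  set (A := 1 + (ln x + 1 / 32 - ln 2) / 2 + / 4 * (1 + (ln x + 4 / 32 - 3 * ln 2) / 2)
            + / 4 * (1 + (ln x + 8 / 32 - 4 * ln 2) / 2)).
  assert (HA : A <= 0.4123 * (2 * ln x + 5 - 4 * ln 2 - ln 3)) by (unfold A; lra).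
  assert (x * (1 + ln ((x + 1) / 2) / 2) + x / 4 * (1 + ln ((x / 4 + 1) / 2) / 2)
          + x / 4 * (1 + ln ((x / 8 + 1) / 2) / 2) <= x * A) by (unfold A; nra).
  nra.
Qed.

Lemma weighted_odd_divisor_count_le_large X : (32 <= X)%Z ->
  IZR (weighted_odd_divisor_count X) <= 0.4123 * IZR X * (2 * ln (IZR X) + 5 - 4 * ln 2 - ln 3).
Proof.
  intros HX; eapply Rle_trans; [apply weighted_odd_divisor_count_le; lia|].
  assert (HxR : 32 <= IZR X) by (apply IZR_le; lia).
  eapply Rle_trans; [|apply harmonic_bound_le; exact HxR].
  pose proof (odd_harmonic_le_IZR X ltac:(lia)).
  pose proof (odd_harmonic_div_le X 4 ltac:(lia) ltac:(lia)).
  pose proof (odd_harmonic_div_le X 8 ltac:(lia) ltac:(lia)).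
  change (IZR 4) with 4 in *; change (IZR 8) with 8 in *.
  nra.
Qed.

Fixpoint ln_lower_sum (n : nat) : R :=
  match n with
  | O | S O => 0
  | S (S k as m) => ln_lower_sum m + 2 / (2 * INR m + 1)
  end.

Lemma ln_lower_sum_le n : (1 <= n)%nat -> 0 <= ln_lower_sum n <= ln (INR n).
Proof.
  induction n as [|[|n] IH]; intros Hn; [lia | simpl; rewrite ln_1; lra|].
  change (ln_lower_sum (S (S n))) with (ln_lower_sum (S n) + 2 / (2 * INR (S n) + 1)).
  pose proof (IH ltac:(lia)).
  assert (Hk : 0 < INR (S n)) by (apply lt_0_INR; lia).
  pose proof (ln_succ_sub_ge (INR (S n)) Hk) as Hstep; rewrite <- S_INR in Hstep.
  assert (0 <= 2 / (2 * INR (S n) + 1)) by (apply Rlt_le, Rdiv_lt_0_compat; lra).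
  lra.
Qed.

Lemma weighted_odd_divisor_count_le_small n : (2 <= n <= 31)%nat ->
  IZR (weighted_odd_divisor_count (Z.of_nat n))
  <= 0.4123 * INR n * (2 * ln_lower_sum n + 5 - 4 * 0.6942 - 1.1005).
Proof.
  intros Hn; do 2 (destruct n as [|n]; [lia|]).
  do 30 (destruct n as [|n];
    [ match goal with |- context [weighted_odd_divisor_count ?x] =>
        let v := eval vm_compute in (weighted_odd_divisor_count x) in
        replace (weighted_odd_divisor_count x) with v by (vm_compute; reflexivity)
      end;
      cbn [ln_lower_sum]; rewrite ?S_INR; simpl INR; lra |]).
  lia.
Qed.

Definition main_term (x : R) : R := 3 * sqrt 3 / (4 * PI) * x * (2 * ln x + 5 - 4 * ln 2 - ln 3).

Lemma main_constant_ge : 0.4123 <= 3 * sqrt 3 / (4 * PI).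
Proof.
  pose proof sqrt_3_ge; pose proof PI_le_3_15; pose proof PI_RGT_0.
  unfold Rdiv; apply (Rmult_le_reg_r (4 * PI)); [lra|].
  rewrite Rmult_assoc, Rinv_l by lra; lra.
Qed.

Lemma weighted_odd_divisor_count_le_main_term X : (2 <= X)%Z ->
  IZR (weighted_odd_divisor_count X) <= main_term (IZR X).
Proof.
  intros HX; pose proof main_constant_ge; pose proof ln_2_bounds; pose proof ln_3_bounds.
  assert (Hx : 2 <= IZR X) by (apply IZR_le; lia).
  assert (ln 2 <= ln (IZR X)) by (apply ln_le; lra).
  unfold main_term; eapply Rle_trans with (0.4123 * IZR X * (2 * ln (IZR X) + 5 - 4 * ln 2 - ln 3)).
  2: { apply Rmult_le_compat_r; [lra | apply Rmult_le_compat_r; lra]. }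
  destruct (Z_le_gt_dec 32 X) as [Hlarge | Hsmall].
  - now apply weighted_odd_divisor_count_le_large.
  - rewrite <- (Z2Nat.id X) at 1 by lia.
    eapply Rle_trans; [apply weighted_odd_divisor_count_le_small; lia|].
    pose proof (ln_lower_sum_le (Z.to_nat X) ltac:(lia)).
    rewrite INR_IZR_INZ, Z2Nat.id in * by lia.
    apply Rmult_le_compat_l; lra.
Qed.

(* With x = 2 sqrt(p / 3): sqrt 3 x / 2 = sqrt p and 2 ln x - 4 ln 2 - ln 3 = ln p - 2 ln 6. *)
Lemma main_term_le (p X : Z) : (2 <= X)%Z -> (3 * (X * X) <= 4 * p)%Z ->
  main_term (IZR X) <= 3 * sqrt (IZR p) / (2 * PI) * (ln (IZR p) + 5 - 2 * ln 6).
Proof.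
  intros HX Hp; unfold main_term.
  pose proof ln_2_bounds; pose proof ln_3_bounds; pose proof PI_RGT_0.
  set (x := IZR X); set (P := IZR p).
  assert (Hx : 2 <= x) by (apply IZR_le; lia).
  assert (HP : 3 * (x * x) <= 4 * P).
  { unfold x, P; rewrite <- mult_IZR; change 3 with (IZR 3); change 4 with (IZR 4).
    rewrite <- !mult_IZR; apply IZR_le; lia. }
  assert (Hsqrt : sqrt 3 * (x / 2) <= sqrt P).
  { rewrite <- (sqrt_square (x / 2)) by lra; rewrite <- sqrt_mult by nra.
    apply sqrt_le_1_alt; nra. }
  assert (Hln : ln 3 + 2 * ln x - 2 * ln 2 <= ln P).
  { assert (E : ln (3 * (x / 2) * (x / 2)) = ln 3 + 2 * ln x - 2 * ln 2)
      by (rewrite !ln_mult, ln_div by lra; ring).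
    rewrite <- E; apply ln_le; nra. }
  assert (E6 : ln 6 = ln 2 + ln 3) by (replace 6 with (2 * 3) by lra; apply ln_mult; lra).
  assert (ln 2 <= ln x) by (apply ln_le; lra).
  assert (Hc : 0 <= 3 / (2 * PI)) by (apply Rlt_le, Rdiv_lt_0_compat; lra).
  pose proof (sqrt_pos 3).
  replace (3 * sqrt 3 / (4 * PI) * x * (2 * ln x + 5 - 4 * ln 2 - ln 3))
    with (3 / (2 * PI) * (sqrt 3 * (x / 2)) * (2 * ln x + 5 - 4 * ln 2 - ln 3)) by (field; lra).
  replace (3 * sqrt P / (2 * PI) * (ln P + 5 - 2 * ln 6))
    with (3 / (2 * PI) * sqrt P * (ln P + 5 - 2 * ln 6)) by (field; lra).
  apply Rmult_le_compat; [apply Rmult_le_pos; [exact Hc | nra] | lra | |lra].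
  apply Rmult_le_compat_l; [exact Hc | exact Hsqrt].
Qed.

Lemma sqrt_4p_div_3_spec p : (5 <= p)%Z ->
  let X := Z.sqrt (4 * p / 3) in
  (2 <= X /\ 3 * (X * X) <= 4 * p /\ 4 * p < 3 * ((X + 1) * (X + 1)) /\ X < p)%Z.
Proof.
  intros Hp X.
  assert (Hq : (0 <= 4 * p / 3)%Z) by (apply Z.div_pos; lia).
  destruct (Z.sqrt_spec (4 * p / 3) Hq) as [Hlo Hhi]; fold X in Hlo, Hhi.
  pose proof (Z.mul_div_le (4 * p) 3 ltac:(lia)); pose proof (Z.mod_pos_bound (4 * p) 3 ltac:(lia)).
  pose proof (Z.div_mod (4 * p) 3 ltac:(lia)).
  assert (H2 : (2 <= X)%Z).
  { apply Z.sqrt_le_square; [lia | lia | apply Z.div_le_lower_bound; lia]. }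
  repeat split; nia.
Qed.

Theorem corollary3p10 (p : Z) (hp : prime p) (hp5 : (5 <= p)%Z) :
  exists h : nat, is_class_number (- 4 * p) h /\
    (INR h <= 3 * sqrt (IZR p) / (2 * PI) * (ln (IZR p) + 5 - 2 * ln 6))%R.
Proof.
  destruct (sqrt_4p_div_3_spec p hp5) as (HX2 & HX & HXsucc & HXp).
  set (X := Z.sqrt (4 * p / 3)) in *.
  destruct (class_number_le_candidates (- 4 * p) X) as (h & Hh & Hle); [lia | lia | lia |].
  exists h; split; [exact Hh|].
  pose proof (length_candidate_forms_le p X hp (prime_odd p hp ltac:(lia)) HXp) as Hcount.
  rewrite INR_IZR_INZ.
  apply Rle_trans with (IZR (weighted_odd_divisor_count X)); [apply IZR_le; lia|].
  eapply Rle_trans; [now apply weighted_odd_divisor_count_le_main_term|].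
  now apply main_term_le.
Qed.
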